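(* Let $X$ be a prelength space, $Y$ a metric space, and $f:X\to Y$ uniformly continuous with modulus $\mu_f$. For every $x\in\mathfrak{C}(X)$, the function $\mathrm{map}(f)(x)=f\circ x\circ\mu_f$, i.e. $\lambda\varepsilon.\,f(x(\mu_f(\varepsilon)))$, is a regular function over $Y$.
   Context: $\mathbb{Q}^+$ denotes the strictly positive rationals; all $\varepsilon,\delta$ (with indices) range over $\mathbb{Q}^+$. A metric space is a triple $(X,\asymp,B)$ where $\asymp$ is an equivalence relation on $X$ and $B$ assigns to each $\varepsilon\in\mathbb{Q}^+$ a binary relation $B_\varepsilon$ on $X$ respecting $\asymp$, such that: (1) each $B_\varepsilon$ is reflexive; (2) each $B_\varepsilon$ is symmetric; (3) if $B_{\varepsilon_1}(a,b)$ and $B_{\varepsilon_2}(b,c)$ then $B_{\varepsilon_1+\varepsilon_2}(a,c)$; (4) if $B_{\varepsilon+\delta}(a,b)$ for all $\delta$, then $B_\varepsilon(a,b)$; (5) if $B_\varepsilon(a,b)$ for all $\varepsilon$, then $a\asymp b$. A prelength space is a metric space such that for all $a,b,\varepsilon,\delta_1,\delta_2$ with $\varepsilon<\delta_1+\delta_2$ and $B_\varepsilon(a,b)$ there exists $c$ with $B_{\delta_1}(a,c)$ and $B_{\delta_2}(c,b)$. A regular function over $X$ is a function $x:\mathbb{Q}^+\to X$ such that $B_{\varepsilon_1+\varepsilon_2}(x(\varepsilon_1),x(\varepsilon_2))$ for all $\varepsilon_1,\varepsilon_2$; $\mathfrak{C}(X)$ denotes the set of regular functions over $X$. A function $f:X\to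 Y$ between metric spaces is uniformly continuous with modulus $\mu:\mathbb{Q}^+\to\mathbb{Q}^+$ if for all $\varepsilon,x_1,x_2$, $B^X_{\mu(\varepsilon)}(x_1,x_2)$ implies $B^Y_\varepsilon(f(x_1),f(x_2))$. *)

From mathcomp Require Import all_boot all_order all_algebra.
Set Implicit Arguments. Unset Strict Implicit. Unset Printing Implicit Defensive.
Import Order.TTheory GRing.Theory Num.Theory.
Local Open Scope ring_scope.

Record Qpos := mkQpos { qval :> rat ; qval_gt0 : 0 < qval }.

Lemma Qpos_add_gt0 (e d : Qpos) : 0 < qval e + qval d.
Proof. by apply: addr_gt0; apply: qval_gt0. Qed.

Definition Qpos_add (e d : Qpos) : Qpos := mkQpos (Qpos_add_gt0 e d).

Record is_metric (X : Type) (eqv : X -> X -> Prop)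
    (B : Qpos -> X -> X -> Prop) : Prop := {
  eqv_refl : forall a, eqv a a;
  eqv_sym : forall a b, eqv a b -> eqv b a;
  eqv_trans : forall a b c, eqv a b -> eqv b c -> eqv a c;
  ball_respects : forall e a a' b b', eqv a a' -> eqv b b' ->
      B e a b -> B e a' b';
  ball_refl : forall e a, B e a a;
  ball_sym : forall e a b, B e a b -> B e b a;
  ball_triangle : forall e1 e2 a b c, B e1 a b -> B e2 b c ->
      B (Qpos_add e1 e2) a c;
  ball_closed : forall e a b, (forall d, B (Qpos_add e d) a b) -> B e a b;
  ball_eq : forall a b, (forall e, B e a b) -> eqv a b
}.

Definition is_prelength (X : Type) (eqv : X -> X -> Prop)
    (B : Qpos -> X -> X -> Prop) : Prop :=
  is_metric eqv B /\
  forall (a b : X) (e d1 d2 : Qpos), qval e < qval d1 + qval d2 ->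
    B e a b -> exists c, B d1 a c /\ B d2 c b.

Definition is_regular (X : Type) (B : Qpos -> X -> X -> Prop)
    (x : Qpos -> X) : Prop :=
  forall e1 e2 : Qpos, B (Qpos_add e1 e2) (x e1) (x e2).

Definition is_uc_with (X Y : Type) (BX : Qpos -> X -> X -> Prop)
    (BY : Qpos -> Y -> Y -> Prop) (f : X -> Y) (mu : Qpos -> Qpos) : Prop :=
  forall (e : Qpos) (x1 x2 : X), BX (mu e) x1 x2 -> BY e (f x1) (f x2).

Definition map_reg (X Y : Type) (f : X -> Y) (mu : Qpos -> Qpos)
    (x : Qpos -> X) : Qpos -> Y := fun e => f (x (mu e)).

(* The points x (mu e1) and x (mu e2) are mu e1 + mu e2 close.  Since the prelength
   property only splits a ball into two of strictly larger total radius, the gap is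
   bridged by three steps of sizes mu e1, mu d, mu e2 with d arbitrary; applying f
   gives closeness e1 + d + e2, and closedness of balls lets d go to zero. *)
From mathcomp Require Import all_boot all_order all_algebra ring.
Set Implicit Arguments. Unset Strict Implicit.
Import Order.TTheory GRing.Theory Num.Theory.
Local Open Scope ring_scope.

Lemma qval_inj : injective qval.
Proof.
case=> e He [d Hd] /= Hed; subst d.
by rewrite (bool_irrelevance He Hd).
Qed.

Lemma ball_qval_eq (X : Type) (B : Qpos -> X -> X -> Prop) (e e' : Qpos) a b :
  qval e = qval e' -> B e a b -> B e' a b.
Proof. by move=> /qval_inj ->. Qed.

Lemma Qpos_half_gt0 (d : Qpos) : 0 < qval d / 2.
Proof. exact: divr_gt0 (qval_gt0 d) _. Qed.

Definition Qpos_half (d : Qpos) : Qpos := mkQpos (Qpos_half_gt0 d).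

Section PrelengthBridge.

Variables (X : Type) (eqX : X -> X -> Prop) (BX : Qpos -> X -> X -> Prop).
Hypothesis HX : is_prelength eqX BX.

Lemma prelength_ball_split3 (d1 d2 d3 : Qpos) (a b : X) :
  BX (Qpos_add d1 d3) a b ->
  exists c c', [/\ BX d1 a c, BX d2 c c' & BX d3 c' b].
Proof.
case: HX => _ split2 Hab.
have [c [Hac Hcb]] : exists c, BX d1 a c /\ BX (Qpos_add d3 (Qpos_half d2)) c b.
  by apply: split2 Hab; rewrite /= ltrD2l ltrDl Qpos_half_gt0.
have [c' [Hcc' Hc'b]] : exists c', BX d2 c c' /\ BX d3 c' b.
  apply: split2 Hcb; rewrite /= addrC ltrD2r.
  by rewrite ltr_pdivrMr // ltr_pMr ?qval_gt0 // ltr1n.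
by exists c, c'.
Qed.

Variables (Y : Type) (eqY : Y -> Y -> Prop) (BY : Qpos -> Y -> Y -> Prop).
Hypothesis HY : is_metric eqY BY.
Variables (f : X -> Y) (mu : Qpos -> Qpos).
Hypothesis Hf : is_uc_with BX BY f mu.

Lemma uc_prelength_ball_add (e1 e2 : Qpos) (a b : X) :
  BX (Qpos_add (mu e1) (mu e2)) a b -> BY (Qpos_add e1 e2) (f a) (f b).
Proof.
move=> Hab; apply: (ball_closed HY) => d.
have [c [c' [Hac Hcc' Hc'b]]] := prelength_ball_split3 (mu d) Hab.
have := ball_triangle HY (ball_triangle HY (Hf Hac) (Hf Hcc')) (Hf Hc'b).
by apply: ball_qval_eq => /=; ring.
Qed.

End PrelengthBridge.

Theorem theorem16 (X Y : Type)
    (eqX : X -> X -> Prop) (BX : Qpos -> X -> X -> Prop)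
    (eqY : Y -> Y -> Prop) (BY : Qpos -> Y -> Y -> Prop)
    (HX : is_prelength eqX BX) (HY : is_metric eqY BY)
    (f : X -> Y) (mu : Qpos -> Qpos) (Hf : is_uc_with BX BY f mu)
    (x : Qpos -> X) (Hx : is_regular BX x) :
  is_regular BY (map_reg f mu x).
Proof. by move=> e1 e2; apply: (uc_prelength_ball_add HX HY Hf); apply: Hx. Qed.
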